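(* Let $\mathcal{C}\subseteq\mathbb{F}_q^n$ be a perfect $t$-error-correcting code with $|\mathcal{C}|\ge 2$, i.e. $\mathcal{C}$ has minimum distance $2t+1$ and $|\mathcal{C}|\cdot\sum_{i=0}^{t}\binom{n}{i}(q-1)^i=q^n$. Then the minimum-distance graph $G(\mathcal{C})$ is connected.
   Context: $d(\cdot,\cdot)$ is Hamming distance. The minimum-distance graph $G(\mathcal{C})$ of a code $\mathcal{C}$ is the graph with vertex set $\mathcal{C}$ in which distinct $c_1,c_2$ are adjacent iff $d(c_1,c_2)=d_{\min}(\mathcal{C})$, the minimum distance of $\mathcal{C}$. *)

From mathcomp Require Import all_boot all_order all_algebra.
Set Implicit Arguments. Unset Strict Implicit. Unset Printing Implicit Defensive.

Definition hamming (F : finFieldType) (n : nat) (u v : 'rV[F]_n) : nat :=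
  #|[set i : 'I_n | u ord0 i != v ord0 i]|.

(* Minimum distance of a code C: min of d(c1,c2) over distinct c1,c2 in C.
   (For |C| <= 1 the value defaults to n; only used when |C| >= 2.) *)
Definition min_dist (F : finFieldType) (n : nat) (C : {set 'rV[F]_n}) : nat :=
  \big[minn/n]_(x in C) \big[minn/n]_(y in C | y != x) hamming x y.

Definition mdg_rel (F : finFieldType) (n : nat) (C : {set 'rV[F]_n}) :
  rel 'rV[F]_n :=
  fun x y => [&& x \in C, y \in C, x != y & hamming x y == min_dist C].

Definition mdg_connected (F : finFieldType) (n : nat) (C : {set 'rV[F]_n}) :=
  forall x y, x \in C -> y \in C -> connect (mdg_rel C) x y.

From mathcomp Require Import all_boot all_order all_algebra.
From mathcomp Require Import zify.
Set Implicit Arguments. Unset Strict Implicit. Unset Printing Implicit Defensive.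

(* The balls of radius t around the codewords are disjoint, so the sphere-packing
   equality forces them to cover the whole space.  Given codewords x <> y, walk
   t + 1 steps from x towards y and take the codeword z whose ball contains the
   point reached: d(x, z) <= 2t + 1 forces d(x, z) = 2t + 1, so x z is an edge of
   G(C), and d(z, y) <= t + (d(x, y) - t - 1) < d(x, y).  Induction on the
   distance to y then joins x to y. *)

Lemma connect_descent (T : finType) (e : rel T) (A : {set T}) (m : T -> nat) y :
    (forall x, x \in A -> x != y -> exists2 z, e x z & (z \in A) && (m z < m x)) ->
  forall x, x \in A -> connect e x y.
Proof.
move=> descent x; have [k] := ubnP (m x); elim: k x => // k IH x ltxk Ax.
have [-> | neq_xy] := eqVneq x y; first exact: connect0.
have [z exz /andP[Az ltzx]] := descent x Ax neq_xy.
exact: connect_trans (connect1 exz) (IH z (leq_trans ltzx ltxk) Az).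
Qed.

Definition ball_size (q n t : nat) := \sum_(i < t.+1) 'C(n, i) * (q - 1) ^ i.

Section CountDisagreements.
Variables (I T : finType) (g : I -> T).

Lemma card_ffun_disagree_on (S : {set I}) :
  #|[set f : {ffun I -> T} | [set i | f i != g i] == S]| = (#|T| - 1) ^ #|S|.
Proof.
pose fam i := if i \in S then predC1 (g i) else pred1 (g i).
rewrite (eq_card (B := family fam)); last first.
  move=> f; rewrite inE; apply/eqP/familyP => [def_S i | f_fam].
    by rewrite /fam -def_S inE; case: eqVneq => [-> | ne]; rewrite !inE ?eqxx ?ne.
  apply/setP => i; have := f_fam i; rewrite inE /fam.
  by case: (i \in S); rewrite inE // => /eqP ->; rewrite eqxx.
rewrite card_family foldrE big_map big_enum /=.
rewrite (eq_bigr (fun i => if i \in S then #|T| - 1 else 1)); last first.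
  by move=> i _; rewrite /fam; case: (i \in S); rewrite ?cardC1 ?card1 ?subn1.
by rewrite -big_mkcond /= prod_nat_const.
Qed.

Lemma card_ffun_disagree k :
  #|[set f : {ffun I -> T} | #|[set i | f i != g i]| == k]| =
  'C(#|I|, k) * (#|T| - 1) ^ k.
Proof.
rewrite -sum1_card (partition_big (fun f : {ffun I -> T} => [set i | f i != g i])
  (fun S => #|S| == k)) => [|f]; last by rewrite inE.
rewrite (eq_bigr (fun _ => (#|T| - 1) ^ k)) => [|S /eqP cardS].
  by rewrite sum_nat_cond_const card_draws.
rewrite sum_nat_cond_const muln1 -cardS -card_ffun_disagree_on.
apply: eq_card => f; rewrite !inE andb_idl // => /eqP->.
by rewrite cardS.
Qed.

Lemma card_ffun_disagree_leq t :
  #|[set f : {ffun I -> T} | #|[set i | f i != g i]| <= t]| =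
  ball_size #|T| #|I| t.
Proof.
rewrite -sum1_card (partition_big
  (fun f : {ffun I -> T} => inord #|[set i | f i != g i]| : 'I_t.+1) predT) //.
apply: eq_bigr => k _; rewrite sum_nat_cond_const muln1 -card_ffun_disagree.
apply: eq_card => f; rewrite !inE.
apply/andP/eqP => [[le_t /eqP <-] | def_k]; first by rewrite inordK.
have lt_t : #|[set i | f i != g i]| < t.+1 by rewrite def_k.
by split=> //; apply/eqP/val_inj; rewrite /= inordK.
Qed.

End CountDisagreements.

Lemma bigminn_leq (I : eqType) (r : seq I) (P : pred I) (E : I -> nat) x j :
  j \in r -> P j -> \big[minn/x]_(i <- r | P i) E i <= E j.
Proof.
elim: r => // i r IH; rewrite inE big_cons => /predU1P[-> -> | jr Pj].
  exact: geq_minl.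
by case: (P i); [apply: leq_trans (geq_minr _ _) _ |]; apply: IH.
Qed.

Section Hamming.
Variables (F : finFieldType) (n : nat).
Local Notation V := 'rV[F]_n.

Lemma hammingC (u v : V) : hamming u v = hamming v u.
Proof. by apply: eq_card => i; rewrite !inE eq_sym. Qed.

Lemma hamming_triangle (u v w : V) : hamming u w <= hamming u v + hamming v w.
Proof.
apply: leq_trans (leq_card_setU [set i | u ord0 i != v ord0 i]
  [set i | v ord0 i != w ord0 i]); apply/subset_leq_card/subsetP => i.
rewrite !inE => neq_uw; case: (eqVneq (u ord0 i) (v ord0 i)) => [eq_uv | //].
by rewrite -eq_uv neq_uw orbT.
Qed.

Lemma min_dist_leq_hamming (C : {set V}) x y :
  x \in C -> y \in C -> x != y -> min_dist C <= hamming x y.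
Proof.
move=> xC yC neq_xy; rewrite /min_dist.
apply: leq_trans (bigminn_leq _ _ (mem_index_enum x) xC) _.
by apply: bigminn_leq (mem_index_enum y) _; rewrite yC eq_sym.
Qed.

Lemma hamming_interpolate (x y : V) k : k <= hamming x y ->
  exists w : V, hamming x w = k /\ hamming w y = hamming x y - k.
Proof.
move=> le_k; pose D := [set i | x ord0 i != y ord0 i].
pose S := [set i in take k (enum D)].
have sSD : S \subset D.
  by apply/subsetP => i; rewrite inE => /mem_take; rewrite mem_enum.
have cardS : #|S| = k.
  rewrite cardsE; move/card_uniqP: (take_uniq k (enum_uniq (mem D))) => ->.
  by rewrite size_takel // -cardE.
exists (\row_j (if j \in S then y ord0 j else x ord0 j))%R; split.
  rewrite -cardS; apply: eq_card => j; rewrite inE mxE.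
  by case: ifP => [/(subsetP sSD)| _]; rewrite ?inE ?eqxx.
have -> : hamming (\row_j (if j \in S then y ord0 j else x ord0 j))%R y = #|D :\: S|.
  apply: eq_card => j; rewrite in_setD [j \in D]inE [in LHS]inE mxE.
  by case: (j \in S); rewrite ?eqxx.
by rewrite cardsD (setIidPr sSD) cardS.
Qed.

Definition hamming_ball (c : V) t := [set v | hamming c v <= t].

Lemma card_hamming_ball (c : V) t : #|hamming_ball c t| = ball_size #|F| n t.
Proof.
pose rowf (f : {ffun 'I_n -> F}) : V := (\row_j f j)%R.
have rowf_inj : injective rowf.
  by move=> f1 f2 /rowP eq_f; apply/ffunP => j; have := eq_f j; rewrite !mxE.
rewrite -[n in RHS]card_ord -(card_ffun_disagree_leq (c ord0)).
rewrite -(card_imset _ rowf_inj); apply: eq_card => v; rewrite inE.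
apply/idP/imsetP => [ball_v | [f f_ball ->]].
  exists [ffun j => v ord0 j]; last by apply/rowP => j; rewrite !mxE ffunE.
  rewrite inE (eq_card (B := [set i | c ord0 i != v ord0 i])) // => i.
  by rewrite !inE ffunE eq_sym.
rewrite inE in f_ball.
rewrite /hamming (eq_card (B := [set i | f i != c ord0 i])) // => i.
by rewrite !inE mxE eq_sym.
Qed.

Lemma perfect_code_covering (C : {set V}) t :
    2 * t < min_dist C -> #|C| * ball_size #|F| n t = #|F| ^ n ->
  forall w, exists2 c, c \in C & hamming c w <= t.
Proof.
move=> lt_2t_d perfect w.
pose B c := if c \in C then hamming_ball c t else set0.
have disjB c1 c2 : c1 != c2 -> [disjoint B c1 & B c2].
  rewrite -setI_eq0 /B; case: ifP => c1C; case: ifP => c2C neq12;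
    rewrite ?set0I ?setI0 // setI_eq0 disjoints_subset.
  apply/subsetP => v; rewrite !inE -ltnNge (hammingC c2) => le1.
  have := min_dist_leq_hamming c1C c2C neq12.
  have := hamming_triangle c1 v c2; lia.
have cardB : #|\bigcup_c B c| = #|C| * ball_size #|F| n t.
  rewrite -sum1_card partition_disjoint_bigcup // -sum_nat_const [RHS]big_mkcond.
  apply: eq_bigr => c _; rewrite /B; case: ifP => _; last by rewrite big_set0.
  by rewrite sum1_card card_hamming_ball.
have : w \in \bigcup_c B c.
  suff -> : \bigcup_c B c = setT by rewrite inE.
  by apply/eqP; rewrite eqEcard subsetT cardsT card_mx mul1n cardB perfect leqnn.
by case/bigcupP => c _; rewrite /B; case: ifP => cC; rewrite !inE // => ?; exists c.
Qed.

End Hamming.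

Section PerfectCode.
Variables (F : finFieldType) (n t : nat) (C : {set 'rV[F]_n}).
Hypothesis min_dist_C : min_dist C = 2 * t + 1.
Hypothesis C_covering : forall w, exists2 c, c \in C & hamming c w <= t.

Lemma perfect_code_descent x y : x \in C -> y \in C -> x != y ->
  exists2 z, mdg_rel C x z & (z \in C) && (hamming z y < hamming x y).
Proof.
move=> xC yC neq_xy.
have le_d_xy := min_dist_leq_hamming xC yC neq_xy.
have [w [d_xw d_wy]] : exists w, hamming x w = t.+1 /\
    hamming w y = hamming x y - t.+1 by apply: hamming_interpolate; lia.
have [z zC d_zw] := C_covering w.
have neq_xz : x != z by apply: contraTneq d_zw => <-; rewrite d_xw ltnn.
have le_d_xz := min_dist_leq_hamming xC zC neq_xz.
have := hamming_triangle x w z; have := hamming_triangle z w y.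
rewrite (hammingC w z) => tri_zwy tri_xwz.
exists z; last by rewrite zC; lia.
by rewrite /mdg_rel xC zC neq_xz; apply/eqP; lia.
Qed.

End PerfectCode.

Theorem theorem8 (F : finFieldType) (n t : nat) (C : {set 'rV[F]_n}) :
  2 <= #|C| ->
  min_dist C = 2 * t + 1 ->
  #|C| * (\sum_(i < t.+1) 'C(n, i) * (#|F| - 1) ^ i) = #|F| ^ n ->
  mdg_connected C.
Proof.
move=> _ min_dist_C perfect x y xC yC.
have lt_2t_d : 2 * t < min_dist C by lia.
have covering := perfect_code_covering lt_2t_d perfect.
apply: (connect_descent (m := fun v => hamming v y)) xC => {}x xC neq_xy.
exact: (perfect_code_descent min_dist_C covering xC yC neq_xy).
Qed.
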